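(* If $r\ge 2$, then the glued binary tree $GT(r)$ satisfies $\mu_{\rm t}(GT(r))=\mu_{\rm d}(GT(r))=2^{r-1}$, and the number of $\mu_{\rm t}$-sets and the number of $\mu_{\rm d}$-sets of $GT(r)$ are both equal to $2^{2^{r-1}}$.
   Context: A perfect binary tree of depth $r\ge1$ is a rooted tree in which every non-leaf vertex has exactly $2$ children and all leaves have depth $r$. The glued binary tree $GT(r)$ is obtained from two copies of the perfect binary tree of depth $r$ by pairwise identifying their leaves (via a fixed isomorphism of the copies). For $S\subseteq V(G)$, two vertices $u,v$ are $S$-visible if there exists a shortest $u,v$-path $P$ with $V(P)\cap S\subseteq\{u,v\}$; $S$ is a mutual-visibility set if every two vertices of $S$ are $S$-visible. $S$ is a dual mutual-visibility set if it is a mutual-visibility set and every pair $u,v\in V(G)\setminus S$ is $S$-visible. $S$ is a total mutual-visibility set if every pair of vertices of $G$ is $S$-visible. Largest dual (resp. total) mutual-visibility sets are $\mu_{\rm d}$-sets (resp. $\mu_{\rm t}$-sets), and their sizes are $\mu_{\rm d}(G)$ (resp. $\mu_{\rm t}(G)$). *)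

From mathcomp Require Import all_boot.
Set Implicit Arguments. Unset Strict Implicit. Unset Printing Implicit Defensive.

Section Visibility.
Variables (T : finType) (adj : rel T).

Definition walk (u v : T) (p : seq T) : Prop := path adj u p /\ last u p = v.

(** A shortest u,v-path: a u,v-walk of minimum length (such walks are paths). *)
Definition shortest_path (u v : T) (p : seq T) : Prop :=
  walk u v p /\ forall q, walk u v q -> size p <= size q.

Definition S_visible (S : {set T}) (u v : T) : Prop :=
  exists p, shortest_path u v p /\
    forall x, x \in u :: p -> x \in S -> x = u \/ x = v.

Definition mutual_visibility_set (S : {set T}) : Prop :=
  forall u v, u \in S -> v \in S -> S_visible S u v.

Definition dual_mutual_visibility_set (S : {set T}) : Prop :=
  mutual_visibility_set S /\
  forall u v, u \notin S -> v \notin S -> S_visible S u v.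

Definition total_mutual_visibility_set (S : {set T}) : Prop :=
  forall u v, S_visible S u v.

Definition mu_d_set (S : {set T}) : Prop :=
  dual_mutual_visibility_set S /\
  forall S', dual_mutual_visibility_set S' -> #|S'| <= #|S|.

Definition mu_t_set (S : {set T}) : Prop :=
  total_mutual_visibility_set S /\
  forall S', total_mutual_visibility_set S' -> #|S'| <= #|S|.

Definition mu_d_eq (k : nat) : Prop :=
  (exists S, dual_mutual_visibility_set S /\ #|S| = k) /\
  forall S, dual_mutual_visibility_set S -> #|S| <= k.

Definition mu_t_eq (k : nat) : Prop :=
  (exists S, total_mutual_visibility_set S /\ #|S| = k) /\
  forall S, total_mutual_visibility_set S -> #|S| <= k.

Definition num_sets_eq (P : {set T} -> Prop) (k : nat) : Prop :=
  exists F : {set {set T}}, (forall S, S \in F <-> P S) /\ #|F| = k.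

End Visibility.

(** Nodes of a perfect binary tree of depth r are heap-indexed by
    1 .. 2^(r+1)-1: root 1, children of i are 2i and 2i+1, leaves are the
    indices i with 2^r <= i.  A vertex of GT(r) is a pair (c, i) with c the
    copy (false/true) and i a node index; leaves are shared by both copies,
    represented canonically with c = false. *)
Definition gt_leaf (r i : nat) : bool := 2 ^ r <= i.

Definition gt_valid (r : nat) (x : bool * 'I_(2 ^ r.+1)) : bool :=
  (0 < x.2) && (gt_leaf r x.2 ==> ~~ x.1).

Definition GTv (r : nat) := {x : bool * 'I_(2 ^ r.+1) | @gt_valid r x}.

(** Edges: parent/child pairs within a copy; an edge at a leaf connects it to
    its parent in both copies. *)
Definition gt_adj (r : nat) : rel (GTv r) := fun x y =>
  let: (c, i) := val x in let: (d, j) := val y in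
  ((i == j./2 :> nat) || (j == i./2 :> nat)) &&
  [|| c == d, gt_leaf r i | gt_leaf r j].

From mathcomp Require Import all_boot zify.
Set Implicit Arguments. Unset Strict Implicit. Unset Printing Implicit Defensive.

(* The leaves of GT(r) come in 2^(r-1) twin pairs (the two children of a node
   of depth r-1), and twins have the same neighbourhood.  A set picking one
   leaf from every pair is a total mutual-visibility set: on a shortest path,
   each interior vertex of the set can be swapped for its twin.  Conversely,
   in a dual mutual-visibility set S, every pair of vertices that is not
   S-visible has exactly one end in S.  Around a hypothetical internal vertex
   of S (its parent, children, sibling and copy in the other tree) such pairs
   force a contradiction, so S consists of leaves; and two twin leaves in S
   would make the two copies of their parent invisible to each other.  Hence
   the maximum sets are exactly the 2^(2^(r-1)) one-leaf-per-pair choices. *)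

Section MutualVisibility.
Variables (T : finType) (adj : rel T).

Lemma shortest_path_exists u v p : walk adj u v p -> exists q, shortest_path adj u v q.
Proof.
move=> [pp lp].
pose has_walk n := [exists t : n.-tuple T, path adj u t && (last u t == v)].
have ex_len : exists n, has_walk n.
  by exists (size p); apply/existsP; exists (in_tuple p); rewrite pp lp eqxx.
case: (ex_minnP ex_len) => n /existsP[t /andP[pt /eqP lt]] min_n.
exists t; split=> // q [pq lq]; rewrite size_tuple; apply: min_n.
by apply/existsP; exists (in_tuple q); rewrite pq lq eqxx.
Qed.

Lemma dual_mvs_split S a b : dual_mutual_visibility_set adj S ->
  ~ S_visible adj S a b -> (a \in S) = (b \notin S).
Proof.
case=> mvS dvS nvis; case aS: (a \in S); case bS: (b \in S) => //; case: nvis.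
  exact: mvS.
by apply: dvS; rewrite ?aS ?bS.
Qed.

Lemma total_dual_mvs S :
  total_mutual_visibility_set adj S -> dual_mutual_visibility_set adj S.
Proof. by move=> tS; split=> u v *; apply: tS. Qed.

Lemma not_visible_dist2 (S : {set T}) a b : a <> b -> ~~ adj a b ->
  (exists z, adj a z && adj z b) ->
  (forall z, adj a z -> adj z b -> [/\ z \in S, z <> a & z <> b]) ->
  ~ S_visible adj S a b.
Proof.
move=> ab nab [z0 /andP[az0 z0b]] blocked [p [[[pp lp] min_p] vis]].
have : size p <= 2 by apply: (min_p [:: z0; b]); rewrite /walk /= az0 z0b.
case: p pp lp {min_p} vis => [|z [|w [|? ?]]] //=.
  by rewrite andbT => az zb; subst z; rewrite az in nab.
move=> /and3P[az zw _] wb vis _; subst w.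
have [zS za zb] := blocked z az zw.
by have [] := vis z; rewrite ?inE ?eqxx ?orbT.
Qed.

Lemma not_visible_dist3 (S : {set T}) a b : a <> b -> ~~ adj a b ->
  (forall z, adj a z -> ~~ adj z b) ->
  (exists z w, [&& adj a z, adj z w & adj w b]) ->
  (forall z w, adj a z -> adj z w -> adj w b ->
     [/\ z \in S, z <> a & z <> b] \/ [/\ w \in S, w <> a & w <> b]) ->
  ~ S_visible adj S a b.
Proof.
move=> ab nab n2 [z0 [w0 /and3P[az0 z0w0 w0b]]] blocked [p [[[pp lp] min_p] vis]].
have : size p <= 3 by apply: (min_p [:: z0; w0; b]); rewrite /walk /= az0 z0w0 w0b.
case: p pp lp {min_p} vis => [|z [|w [|u [|? ?]]]] //=.
- by rewrite andbT => az zb; subst z; rewrite az in nab.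
- by move=> /and3P[az zw _] wb; subst w; move: (n2 z az); rewrite zw.
move=> /and4P[az zw wu _] ub vis _; subst u.
have [[zS za zb]|[wS wa wb]] := blocked z w az zw wu.
  by have [] := vis z; rewrite ?inE ?eqxx ?orbT.
by have [] := vis w; rewrite ?inE ?eqxx ?orbT.
Qed.

Lemma total_mvs_of_twins (S : {set T}) :
  symmetric adj -> (forall u v, exists p, walk adj u v p) ->
  (forall x, x \in S -> exists2 y, y \notin S & forall z, adj x z -> adj y z) ->
  total_mutual_visibility_set adj S.
Proof.
move=> adjC conn twins u v.
have [p0 /shortest_path_exists[p [[pp lp] min_p]]] := conn u v.
pose tw x := odflt x [pick y | (y \notin S) && [forall z, adj x z ==> adj y z]].
have twP x : x \in S -> tw x \notin S /\ forall z, adj x z -> adj (tw x) z.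
  move=> xS; rewrite /tw; case: pickP => [y /andP[yS /forallP yN]|none] /=.
    by split=> // z; apply/implyP/yN.
  have [y yS yN] := twins x xS; move: (none y); rewrite yS /=.
  by have -> : [forall z, adj x z ==> adj y z] by apply/forallP=> z; apply/implyP/yN.
(* Swapping each interior vertex of S for its twin keeps a geodesic a geodesic. *)
pose moved x := [&& x \in S, x != u & x != v].
pose f x := if moved x then tw x else x.
have fu : f u = u by rewrite /f /moved eqxx andbF.
have fv : f v = v by rewrite /f /moved eqxx !andbF.
have tw_adj x y : moved x -> adj x y -> adj (tw x) y.
  by case/and3P=> xS _ _; apply: (twP x xS).2.
have f_adj : {homo f : x y / adj x y}.
  move=> x y xy; rewrite /f; case: ifP => mx; case: ifP => my //.
  - by rewrite adjC; apply: (tw_adj _ _ my); rewrite adjC; apply: (tw_adj _ _ mx).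
  - exact: (tw_adj _ _ mx).
  - by rewrite adjC; apply: (tw_adj _ _ my); rewrite adjC.
exists (map f p); split; [split; [split|] |].
- by rewrite -[u in path _ u _]fu; apply: homo_path pp.
- by rewrite -[u in last u _]fu last_map lp.
- by move=> q wq; rewrite size_map; apply: min_p.
move=> x; rewrite -[u in u :: _]fu -map_cons => /mapP[y _ ->] {x}.
rewrite /f; case: ifP => [/and3P[yS _ _]|]; first by rewrite (negbTE (twP y yS).1).
rewrite /moved => /negbT; case: (y \in S) => //= /nandP[/negPn/eqP|/negPn/eqP] ->; by [left|right].
Qed.

Lemma num_sets_eq_imset (I : finType) (P : {set T} -> Prop) (sel : {set I} -> {set T}) :
  injective sel -> (forall S, P S <-> exists A, S = sel A) ->
  num_sets_eq P (2 ^ #|I|).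
Proof.
move=> sel_inj selP; exists (sel @: setT); split.
  move=> S; rewrite selP; split=> [/imsetP[A _ ->]|[A ->]]; first by exists A.
  exact: imset_f (in_setT A).
by rewrite card_imset // -powersetT card_powerset cardsT.
Qed.

Section MaximumSets.
Variables (I : finType) (sel : {set I} -> {set T}) (m : nat).
Hypothesis sel_total : forall A, total_mutual_visibility_set adj (sel A).
Hypothesis card_sel : forall A, #|sel A| = m.
Hypothesis dual_sub_sel :
  forall S, dual_mutual_visibility_set adj S -> exists A, S \subset sel A.

Lemma dual_mvs_card_le S : dual_mutual_visibility_set adj S -> #|S| <= m.
Proof. by case/dual_sub_sel=> A /subset_leq_card; rewrite card_sel. Qed.

Lemma mu_t_eq_sel : mu_t_eq adj m.
Proof.
split; first by exists (sel set0).
by move=> S /total_dual_mvs; apply: dual_mvs_card_le.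
Qed.

Lemma mu_d_eq_sel : mu_d_eq adj m.
Proof.
split; first by exists (sel set0); split; [apply: total_dual_mvs|].
exact: dual_mvs_card_le.
Qed.

Lemma eq_sel_of_card S : dual_mutual_visibility_set adj S -> m <= #|S| ->
  exists A, S = sel A.
Proof.
move=> dS cS; have [A sSA] := dual_sub_sel dS.
by exists A; apply/eqP; rewrite eqEcard sSA card_sel.
Qed.

Lemma mu_t_setP S : mu_t_set adj S <-> exists A, S = sel A.
Proof.
split=> [[tS maxS]|[A ->]].
  by apply: eq_sel_of_card (total_dual_mvs tS) _; rewrite -(card_sel set0); apply: maxS.
by split=> // S' /total_dual_mvs; rewrite card_sel; apply: dual_mvs_card_le.
Qed.

Lemma mu_d_setP S : mu_d_set adj S <-> exists A, S = sel A.
Proof.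
split=> [[dS maxS]|[A ->]].
  by apply: eq_sel_of_card dS _; rewrite -(card_sel set0); apply/maxS/total_dual_mvs.
split=> [|S']; first exact: total_dual_mvs.
by rewrite card_sel; apply: dual_mvs_card_le.
Qed.

End MaximumSets.

End MutualVisibility.

Section GluedTree.
Variable r : nat.
Hypothesis r_ge2 : 2 <= r.
Implicit Types (S : {set GTv r}) (b c : bool) (v w z : GTv r).

Definition copy v : bool := (val v).1.
Definition idx v : nat := val (val v).2.

Lemma vertex_bounds v :
  [/\ 0 < idx v, idx v < 2 * 2 ^ r & 2 ^ r <= idx v -> copy v = false].
Proof.
case: v => [[c i] valid]; move: valid; rewrite /idx /copy /gt_valid /= => /andP[i0 leaf_c].
rewrite -expnS ltn_ord.
by split=> // ileaf; move: leaf_c; rewrite /gt_leaf ileaf; case: c.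
Qed.

Lemma vertex_inj v w : copy v = copy w -> idx v = idx w -> v = w.
Proof.
case: v w => [[c i] ?] [[d j] ?]; rewrite /copy /idx /= => cd /val_inj ij.
by apply: val_inj; rewrite /= cd ij.
Qed.

Lemma gt_adjE v w : gt_adj v w =
  ((idx v == (idx w)./2) || (idx w == (idx v)./2)) &&
  [|| copy v == copy w, 2 ^ r <= idx v | 2 ^ r <= idx w].
Proof. by case: v w => [[c i] ?] [[d j] ?]. Qed.

Lemma gt_adj_sym : symmetric (@gt_adj r).
Proof. by move=> v w; rewrite !gt_adjE; lia. Qed.

Lemma gt_adj_half v w : gt_adj v w -> idx v = (idx w)./2 \/ idx w = (idx v)./2.
Proof. by rewrite gt_adjE; lia. Qed.

Lemma gt_adj_copy v w : gt_adj v w -> idx v < 2 ^ r -> idx w < 2 ^ r -> copy v = copy w.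
Proof. by rewrite gt_adjE; lia. Qed.

Lemma gt_adj_leaf v w : gt_adj v w -> 2 ^ r <= idx v -> idx w = (idx v)./2.
Proof. by have [_ wr _] := vertex_bounds w; rewrite gt_adjE; lia. Qed.

Lemma gt_adj_parent v w :
  idx w = (idx v)./2 -> copy v = copy w \/ 2 ^ r <= idx v -> gt_adj v w.
Proof. by rewrite gt_adjE; lia. Qed.

Lemma exp2_pred : [/\ 2 ^ r = 2 * 2 ^ r.-1, 2 ^ r.-1 = 2 * 2 ^ r.-2 & 0 < 2 ^ r.-2].
Proof. by case: r r_ge2 => [|[|n]] //= _; rewrite !expnS expn_gt0. Qed.

Lemma one_lt_exp2S : 1 < 2 ^ r.+1.
Proof. by rewrite -{1}(expn0 2) ltn_exp2l. Qed.

Definition root_ord : 'I_(2 ^ r.+1) := Ordinal one_lt_exp2S.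

Definition root : GTv r := exist _ (false, root_ord) (implybT _).

(* [vtx c i] is node [i] of copy [c] (the copy is irrelevant for leaves);
   an out-of-range [i] gives junk. *)
Definition vtx c (i : nat) : GTv r :=
  insubd root (c && (i < 2 ^ r), insubd root_ord i).

Lemma vtx_spec c i : 0 < i < 2 * 2 ^ r ->
  idx (vtx c i) = i /\ copy (vtx c i) = c && (i < 2 ^ r).
Proof.
case/andP=> i0 ir; have iS : i < 2 ^ r.+1 by rewrite expnS.
rewrite /idx /copy /vtx insubdK; last by rewrite unfold_in /gt_valid /gt_leaf /= insubdK //=; lia.
by rewrite /= insubdK.
Qed.
Arguments vtx_spec : clear implicits.

Lemma idx_vtx c i : 0 < i < 2 * 2 ^ r -> idx (vtx c i) = i.
Proof. by case/(vtx_spec c i). Qed.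

Lemma copy_vtx c i : 0 < i < 2 ^ r -> copy (vtx c i) = c.
Proof. by move=> ir; have [|_ ->] := vtx_spec c i; lia. Qed.

Lemma vtx_leaf c c' i : 2 ^ r <= i -> vtx c i = vtx c' i.
Proof. by rewrite /vtx ltnNge => ->; rewrite !andbF. Qed.

Lemma vtx_idx v : vtx (copy v) (idx v) = v.
Proof.
have [i0 ir ls] := vertex_bounds v; have [|hi hs] := vtx_spec (copy v) (idx v); first lia.
by apply: vertex_inj; rewrite ?hi // hs; lia.
Qed.

Lemma leaf_vtx z c : 2 ^ r <= idx z -> z = vtx c (idx z).
Proof.
by move=> zleaf; rewrite (vtx_leaf c (copy z)) ?vtx_idx.
Qed.

Lemma gt_adj_vtx_copy z c j : 0 < j < 2 ^ r -> idx z < 2 ^ r ->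
  gt_adj z (vtx c j) -> copy z = c.
Proof.
move=> jr zr zx; rewrite -(copy_vtx c jr) (gt_adj_copy zx) // idx_vtx //; lia.
Qed.

Lemma internal_adj_vtx z c j : gt_adj z (vtx c j) -> 0 < j < 2 ^ r -> idx z < 2 ^ r ->
  z = vtx c (idx z).
Proof. by move=> zx jr zr; rewrite -{1}(vtx_idx z) (gt_adj_vtx_copy jr zr zx). Qed.

Lemma gt_adj_child c k b : 0 < k -> 2 * k + b < 2 * 2 ^ r ->
  gt_adj (vtx c (2 * k + b)) (vtx c k).
Proof.
move=> k0 kb; apply: gt_adj_parent; first by rewrite !idx_vtx //; lia.
case: (ltnP (2 * k + b) (2 ^ r)) => [kr|kleaf]; last by right; rewrite idx_vtx //; lia.
by left; rewrite !copy_vtx //; lia.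
Qed.

Lemma connect_vtx1 v : connect (@gt_adj r) v (vtx (copy v) 1).
Proof.
have [n] := ubnP (idx v); elim: n v => // n IH v vn.
have [i0 ir ls] := vertex_bounds v.
case: (ltnP 1 (idx v)) => [v1|v1]; last first.
  by rewrite -{1}(vtx_idx v) (_ : idx v = 1) //; lia.
set w := vtx (copy v) (idx v)./2.
have wi : idx w = (idx v)./2 by rewrite idx_vtx //; lia.
have <- : copy w = copy v by rewrite copy_vtx //; lia.
apply: connect_trans (IH w _); last by lia.
by apply/connect1/gt_adj_parent; [rewrite wi | left; rewrite copy_vtx //; lia].
Qed.

Lemma gt_connected u v : exists p, walk (@gt_adj r) u v p.
Proof.
have [pw2 pw1 pw0] := exp2_pred.
have gt_sym := sym_connect_sym gt_adj_sym.
have to_leaf w : connect (@gt_adj r) w (vtx false (2 ^ r)).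
  apply: connect_trans (connect_vtx1 w) _.
  have down : connect (@gt_adj r) (vtx (copy w) 1) (vtx (copy w) (2 ^ r.-1)).
    by rewrite gt_sym -{2}(@copy_vtx (copy w) (2 ^ r.-1)) ?connect_vtx1 //; lia.
  apply: connect_trans down (connect1 _); rewrite (vtx_leaf false (copy w)) //.
  have := @gt_adj_child (copy w) (2 ^ r.-1) false.
  by rewrite addn0 -pw2 gt_adj_sym; apply; lia.
have /connectP[p pp lp] : connect (@gt_adj r) u v.
  by apply: connect_trans (to_leaf u) _; rewrite gt_sym.
by exists p.
Qed.

(* [leaf j false] and [leaf j true] are the two children of node [2 ^ r.-1 + j]. *)
Definition leaf (j : 'I_(2 ^ r.-1)) b : GTv r := vtx false (2 ^ r + 2 * j + b).

Lemma leaf_spec j b : idx (leaf j b) = 2 ^ r + 2 * j + b /\ 2 ^ r <= idx (leaf j b).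
Proof.
have [pw2 _ _] := exp2_pred; have jr := ltn_ord j.
by rewrite idx_vtx; first split; lia.
Qed.

Lemma leaf_inj j j' b b' : leaf j b = leaf j' b' -> j = j' /\ b = b'.
Proof.
move/(congr1 idx); rewrite (leaf_spec j b).1 (leaf_spec j' b').1 => e.
by split; [apply: ord_inj|]; lia.
Qed.

Lemma leafP v : 2 ^ r <= idx v -> exists j b, v = leaf j b.
Proof.
have [pw2 _ _] := exp2_pred; have [_ ir _] := vertex_bounds v => vleaf.
have jr : (idx v - 2 ^ r)./2 < 2 ^ r.-1 by lia.
exists (Ordinal jr), (odd (idx v)).
by rewrite {1}(leaf_vtx false vleaf) /leaf /=; congr vtx; lia.
Qed.

Lemma adj_leaf_twin j b z : gt_adj (leaf j b) z -> gt_adj (leaf j (~~ b)) z.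
Proof.
have [pw2 _ _] := exp2_pred.
have [li lleaf] := leaf_spec j b; have [li' lleaf'] := leaf_spec j (~~ b).
move/gt_adj_leaf => /(_ lleaf) zi.
by apply: gt_adj_parent; [rewrite zi li li'; lia | right].
Qed.

Definition leaf_sel (A : {set 'I_(2 ^ r.-1)}) : {set GTv r} :=
  [set leaf j (j \in A) | j : 'I_(2 ^ r.-1)].

Lemma mem_leaf_sel A j b : (leaf j b \in leaf_sel A) = (b == (j \in A)).
Proof.
apply/imsetP/eqP => [[j' _ /esym/leaf_inj[-> ->]] //|->].
by exists j.
Qed.

Lemma card_leaf_sel A : #|leaf_sel A| = 2 ^ r.-1.
Proof. by rewrite card_imset ?card_ord // => j j' /leaf_inj[]. Qed.

Lemma leaf_sel_inj : injective leaf_sel.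
Proof.
move=> A B AB; apply/setP => j.
by have := mem_leaf_sel B j true; rewrite -AB mem_leaf_sel; case: (j \in A); case: (j \in B).
Qed.

Lemma leaf_sel_total A : total_mutual_visibility_set (@gt_adj r) (leaf_sel A).
Proof.
apply: total_mvs_of_twins gt_adj_sym gt_connected _ => _ /imsetP[j _ ->].
exists (leaf j (~~ (j \in A))); last exact: adj_leaf_twin.
by rewrite mem_leaf_sel; case: (j \in A).
Qed.

Lemma children_not_visible S c k b : vtx c k \in S -> 0 < k -> 2 * k + 1 < 2 ^ r ->
  ~ S_visible (@gt_adj r) S (vtx c (2 * k + b)) (vtx c (2 * k + ~~ b)).
Proof.
move=> xS k0 kr.
have xi : idx (vtx c k) = k by rewrite idx_vtx //; lia.
have ai : idx (vtx c (2 * k + b)) = 2 * k + b by rewrite idx_vtx //; lia.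
have bi : idx (vtx c (2 * k + ~~ b)) = 2 * k + ~~ b by rewrite idx_vtx //; lia.
apply: not_visible_dist2.
- by move/(congr1 idx); rewrite ai bi; lia.
- by apply/negP => /gt_adj_half; rewrite ai bi; lia.
- exists (vtx c k); rewrite [gt_adj (vtx c k) _]gt_adj_sym.
  by rewrite !gt_adj_child //; lia.
move=> z az zb.
have iz : idx z = k by move: (gt_adj_half az) (gt_adj_half zb); rewrite ai bi; lia.
have -> : z = vtx c k by rewrite (internal_adj_vtx zb) ?iz //; lia.
by split=> // /(congr1 idx); lia.
Qed.

Lemma grandchild_not_visible S c i b b' :
  vtx c (2 * i + b) \in S -> 0 < i -> 2 * i + b < 2 ^ r ->
  ~ S_visible (@gt_adj r) S (vtx c i) (vtx c (2 * (2 * i + b) + b')).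
Proof.
move=> xS i0 kr.
have yi : idx (vtx c i) = i by rewrite idx_vtx //; lia.
have xi : idx (vtx c (2 * i + b)) = 2 * i + b by rewrite idx_vtx //; lia.
have li : idx (vtx c (2 * (2 * i + b) + b')) = 2 * (2 * i + b) + b' by rewrite idx_vtx //; lia.
apply: not_visible_dist2.
- by move/(congr1 idx); rewrite yi li; lia.
- by apply/negP => /gt_adj_half; rewrite yi li; lia.
- by exists (vtx c (2 * i + b)); apply/andP; split; rewrite gt_adj_sym gt_adj_child //; lia.
move=> z yz zl.
have iz : idx z = 2 * i + b by move: (gt_adj_half yz) (gt_adj_half zl); rewrite yi li; lia.
have -> : z = vtx c (2 * i + b).
  by rewrite gt_adj_sym in yz; rewrite (internal_adj_vtx yz) ?iz //; lia.
by split=> // /(congr1 idx); lia.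
Qed.

Lemma uncle_not_visible S c i b b' :
  vtx c (2 * i + b) \in S -> 2 ^ r <= 4 * i -> 2 * i + 1 < 2 ^ r ->
  ~ S_visible (@gt_adj r) S (vtx c (2 * i + ~~ b)) (vtx c (2 * (2 * i + b) + b')).
Proof.
move=> xS ir kr.
have xi : idx (vtx c (2 * i + b)) = 2 * i + b by rewrite idx_vtx //; lia.
have si : idx (vtx c (2 * i + ~~ b)) = 2 * i + ~~ b by rewrite idx_vtx //; lia.
have li : idx (vtx c (2 * (2 * i + b) + b')) = 2 * (2 * i + b) + b' by rewrite idx_vtx //; lia.
have lleaf : 2 ^ r <= idx (vtx c (2 * (2 * i + b) + b')) by rewrite li; lia.
apply: not_visible_dist3.
- by move/(congr1 idx); rewrite si li; lia.
- by apply/negP => /gt_adj_half; rewrite si li; lia.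
- move=> z sz; apply/negP; rewrite gt_adj_sym => /gt_adj_leaf/(_ lleaf).
  by move: (gt_adj_half sz); rewrite si li; lia.
- exists (vtx c i), (vtx c (2 * i + b)); apply/and3P; split.
  + by rewrite gt_adj_child //; lia.
  + by rewrite gt_adj_sym gt_adj_child //; lia.
  + by rewrite gt_adj_sym gt_adj_child //; lia.
move=> z w sz zw wl; right.
have iw : idx w = 2 * i + b.
  by rewrite gt_adj_sym in wl; rewrite (gt_adj_leaf wl lleaf) li; lia.
have iz : idx z = i by move: (gt_adj_half sz) (gt_adj_half zw); rewrite si iw; lia.
have ez : z = vtx c i by rewrite gt_adj_sym in sz; rewrite (internal_adj_vtx sz) ?iz //; lia.
have -> : w = vtx c (2 * i + b).
  by rewrite ez gt_adj_sym in zw; rewrite (internal_adj_vtx zw) ?iw //; lia.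
by split=> // /(congr1 idx); rewrite ?si ?li; lia.
Qed.

Lemma copies_not_visible S c k : 2 ^ r <= 2 * k -> k < 2 ^ r ->
  (forall b, vtx c (2 * k + b) \in S) ->
  ~ S_visible (@gt_adj r) S (vtx c k) (vtx (~~ c) k).
Proof.
move=> kl kr lS; have [pw2 _ pw0] := exp2_pred.
have ai : idx (vtx c k) = k by rewrite idx_vtx //; lia.
have bi : idx (vtx (~~ c) k) = k by rewrite idx_vtx //; lia.
apply: not_visible_dist2.
- by move/(congr1 copy); rewrite !copy_vtx //; lia.
- by apply/negP => /gt_adj_half; rewrite ai bi; lia.
- exists (vtx c (2 * k + false)); apply/andP; split.
    by rewrite gt_adj_sym gt_adj_child //; lia.
  by rewrite (vtx_leaf c (~~ c)) ?gt_adj_child //; lia.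
move=> z az zb; rewrite gt_adj_sym in az.
case: (ltnP (idx z) (2 ^ r)) => [zr|zleaf].
  have := gt_adj_vtx_copy _ zr zb; have := gt_adj_vtx_copy _ zr az.
  by move=> -> //; lia.
have iz : idx z = 2 * k + odd (idx z) by move: (gt_adj_leaf az zleaf); rewrite ai; lia.
rewrite (leaf_vtx c zleaf) iz; split=> // /(congr1 idx); rewrite idx_vtx; lia.
Qed.

Lemma parent_copy_not_visible S c i b :
  vtx c (2 * i + b) \in S -> 2 ^ r <= 4 * i -> 2 * i + 1 < 2 ^ r ->
  ~ S_visible (@gt_adj r) S (vtx c i) (vtx (~~ c) (2 * i + b)).
Proof.
move=> xS ir kr.
have yi : idx (vtx c i) = i by rewrite idx_vtx //; lia.
have x'i : idx (vtx (~~ c) (2 * i + b)) = 2 * i + b by rewrite idx_vtx //; lia.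
apply: not_visible_dist3.
- by move/(congr1 idx); rewrite yi x'i; lia.
- apply/negP; rewrite gt_adj_sym => /(gt_adj_vtx_copy _ _).
  by rewrite copy_vtx; lia.
- move=> z yz; apply/negP => zx'.
  by move: (gt_adj_half yz) (gt_adj_half zx'); rewrite yi x'i; lia.
- exists (vtx c (2 * i + b)), (vtx c (2 * (2 * i + b) + false)); apply/and3P; split.
  + by rewrite gt_adj_sym gt_adj_child //; lia.
  + by rewrite gt_adj_sym gt_adj_child //; lia.
  + by rewrite (vtx_leaf c (~~ c)) ?gt_adj_child //; lia.
move=> z w yz zw wx'; rewrite gt_adj_sym in yz.
case: (ltnP (idx w) (2 ^ r)) => [wr|wleaf].
  have iw : idx w = i by move: (gt_adj_half wx'); rewrite x'i; lia.
  have zr : idx z < 2 ^ r by move: (gt_adj_half yz); rewrite yi; lia.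
  have := gt_adj_vtx_copy _ wr wx'; rewrite -(gt_adj_copy zw zr wr).
  by rewrite (gt_adj_vtx_copy _ zr yz); lia.
have iz : idx z = 2 * i + b.
  rewrite gt_adj_sym in zw; rewrite (gt_adj_leaf zw wleaf).
  by move: (gt_adj_leaf wx' wleaf); rewrite x'i.
left; rewrite (internal_adj_vtx yz) ?iz; try lia.
split=> //; first by move/(congr1 idx); rewrite yi idx_vtx; lia.
by move/(congr1 copy); rewrite !copy_vtx //; lia.
Qed.

Section DualSets.
Variable S : {set GTv r}.
Hypothesis dS : dual_mutual_visibility_set (@gt_adj r) S.

Lemma dual_internal_notin c k : 1 < k < 2 ^ r -> vtx c k \notin S.
Proof.
move=> kr; have [pw2 pw1 _] := exp2_pred; have sep := dual_mvs_split dS.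
apply/negP; rewrite (_ : k = 2 * k./2 + odd k); last by lia.
have : 0 < k./2 /\ 2 * k./2 + odd k < 2 ^ r by lia.
move: (k./2) (odd k) => i b {kr} [i0 kr] xS.
have child_sep b' : (vtx c (2 * (2 * i + b) + b') \in S) = (vtx c i \notin S).
  by rewrite (sep _ _ (grandchild_not_visible (b' := b') xS i0 kr)) negbK.
have k0 : 0 < 2 * i + b by lia.
case: (ltnP (2 * (2 * i + b) + 1) (2 ^ r)) => [inner|last_level].
  move: (sep _ _ (children_not_visible (b := false) xS k0 inner)).
  by rewrite !child_sep; case: (_ \in S).
have i4 : 2 ^ r <= 4 * i by lia.
have ki : 2 * i + 1 < 2 ^ r by lia.
case yS: (vtx c i \in S).
  have l0 : vtx c (2 * (2 * i + b) + false) \notin S by rewrite child_sep yS.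
  case sS: (vtx c (2 * i + ~~ b) \in S).
    by move: (sep _ _ (children_not_visible (b := b) yS i0 ki)); rewrite xS sS.
  by move: (sep _ _ (uncle_not_visible (b' := false) xS i4 ki)); rewrite sS (negbTE l0).
have x'S : vtx (~~ c) (2 * i + b) \notin S.
  rewrite -(sep _ _ (copies_not_visible _ kr _)) ?xS //; first lia.
  by move=> b'; rewrite child_sep yS.
by move: (sep _ _ (parent_copy_not_visible xS i4 ki)); rewrite yS x'S.
Qed.

Lemma dual_root_notin c : vtx c 1 \notin S.
Proof.
have [pw2 pw1 pw0] := exp2_pred; have r3 : 2 * 1 + 1 < 2 ^ r by lia.
apply/negP => rS; move: (dual_mvs_split dS (children_not_visible (b := false) rS isT r3)).
have [n2 n3] : vtx c (2 * 1 + false) \notin S /\ vtx c (2 * 1 + ~~ false) \notin S.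
  by split; apply: dual_internal_notin; lia.
by rewrite (negbTE n2) n3.
Qed.

Lemma dual_sub_leaves v : v \in S -> 2 ^ r <= idx v.
Proof.
move=> vS; rewrite leqNgt; apply/negP => vr; have [v0 _ _] := vertex_bounds v.
move: vS; rewrite -(vtx_idx v); case: (ltnP 1 (idx v)) => v1.
  by rewrite (negbTE (dual_internal_notin _ _)) //; lia.
by rewrite (_ : idx v = 1) ?(negbTE (dual_root_notin _)) //; lia.
Qed.

Lemma dual_leaf_twins j : leaf j false \in S -> leaf j true \notin S.
Proof.
have [pw2 pw1 pw0] := exp2_pred; have jr := ltn_ord j.
move=> l0; apply/negP => l1.
have leafE b : leaf j b = vtx false (2 * (2 ^ r.-1 + j) + b) by rewrite /leaf; congr vtx; lia.
have kl : 2 ^ r <= 2 * (2 ^ r.-1 + j) by lia.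
have kr : 2 ^ r.-1 + j < 2 ^ r by lia.
have lS b : vtx false (2 * (2 ^ r.-1 + j) + b) \in S by rewrite -leafE; case: b.
move: (dual_mvs_split dS (copies_not_visible kl kr lS)).
by rewrite !(negbTE (dual_internal_notin _ _)) //; lia.
Qed.

Lemma dual_sub_leaf_sel : exists A, S \subset leaf_sel A.
Proof.
exists [set j | leaf j true \in S]; apply/subsetP => v vS.
have [j [b ev]] := leafP (dual_sub_leaves vS).
move: vS; rewrite {v}ev mem_leaf_sel inE; case: b => vS; first by rewrite vS.
by rewrite (negbTE (dual_leaf_twins vS)).
Qed.

End DualSets.

End GluedTree.

Unset Implicit Arguments.

Theorem mainTheorem5 (r : nat) (hr : 2 <= r) :
  mu_t_eq (@gt_adj r) (2 ^ r.-1) /\ mu_d_eq (@gt_adj r) (2 ^ r.-1) /\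
  num_sets_eq (mu_t_set (@gt_adj r)) (2 ^ (2 ^ r.-1)) /\
  num_sets_eq (mu_d_set (@gt_adj r)) (2 ^ (2 ^ r.-1)).
Proof.
have sel_total := leaf_sel_total hr.
have sel_card := card_leaf_sel hr.
have sel_cover S := @dual_sub_leaf_sel r hr S.
have count (P : {set GTv r} -> Prop) :
  (forall S, P S <-> exists A, S = leaf_sel A) -> num_sets_eq P (2 ^ 2 ^ r.-1).
  by move=> PE; have := num_sets_eq_imset (leaf_sel_inj hr) PE; rewrite card_ord.
split; first exact: mu_t_eq_sel sel_total sel_card sel_cover.
split; first exact: mu_d_eq_sel sel_total sel_card sel_cover.
by split; apply: count => S; [apply: mu_t_setP | apply: mu_d_setP].
Qed.
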